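(* Let $\mathcal{P}$ be a pointsymmetric convex polyhedron with radius $1$ and $\widetilde{\mathcal{P}}$ a $\kappa$-rational approximation of it; let $\widetilde S\in\widetilde{\mathcal{P}}$. Let $\varepsilon>0$, $\bar\theta_1,\bar\varphi_1,\bar\theta_2,\bar\varphi_2,\bar\alpha\in\mathbb{Q}\cap[-4,4]$, and $w\in\mathbb{Q}^2$ a unit vector. Write $\overline{M_k}=M_{\mathbb{Q}}(\bar\theta_k,\bar\varphi_k)$, $\overline{M_k}^\theta=M^\theta_{\mathbb{Q}}(\bar\theta_k,\bar\varphi_k)$, $\overline{M_k}^\varphi=M^\varphi_{\mathbb{Q}}(\bar\theta_k,\bar\varphi_k)$ for $k=1,2$ and set \[ G^{\mathbb{Q}}=\langle R_{\mathbb{Q}}(\bar\alpha)\overline{M_1}\widetilde S,w\rangle-\varepsilon\big(|\langle R'_{\mathbb{Q}}(\bar\alpha)\overline{M_1}\widetilde S,w\rangle|+|\langle R_{\mathbb{Q}}(\bar\alpha)\overline{M_1}^\theta\widetilde S,w\rangle|+|\langle R_{\mathbb{Q}}(\bar\alpha)\overline{M_1}^\varphi\widetilde S,w\rangle|\big)-\tfrac92\varepsilon^2-4\kappa(1+3\varepsilon), \] \[ H^{\mathbb{Q}}_P=\langle\overline{M_2}P,w\rangle+\varepsilon\big(|\langle\overline{M_2}^\theta P,w\rangle|+|\langle\overline{M_2}^\varphi P,w\rangle|\big)+2\varepsilon^2+3\kappa(1+2\varepsilon). \] If $G^{\mathbb{Q}}>\max_{P\in\widetilde{\mathcal{P}}}H^{\mathbb{Q}}_P$,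 then there is no $(\theta_1,\varphi_1,\theta_2,\varphi_2,\alpha)$ with $|\theta_k-\bar\theta_k|,|\varphi_k-\bar\varphi_k|,|\alpha-\bar\alpha|\le\varepsilon$ such that $R(\alpha)M(\theta_1,\varphi_1)\mathcal{P}\subset\operatorname{int}\operatorname{conv}(M(\theta_2,\varphi_2)\mathcal{P})$.
   Context: $\kappa=10^{-10}$. $R(\alpha)=\begin{pmatrix}\cos\alpha&-\sin\alpha\\ \sin\alpha&\cos\alpha\end{pmatrix}$, $R'=\frac{d}{d\alpha}R$; $M(\theta,\varphi)=\begin{pmatrix}-\sin\theta&\cos\theta&0\\ -\cos\theta\cos\varphi&-\sin\theta\cos\varphi&\sin\varphi\end{pmatrix}$, $M^\theta=\partial_\theta M$, $M^\varphi=\partial_\varphi M$. Define $\sin_{\mathbb{Q}}(x)=\sum_{k=0}^{12}(-1)^k\frac{x^{2k+1}}{(2k+1)!}$ and $\cos_{\mathbb{Q}}(x)=\sum_{k=0}^{12}(-1)^k\frac{x^{2k}}{(2k)!}$; $R_{\mathbb{Q}},R'_{\mathbb{Q}},M_{\mathbb{Q}},M^\theta_{\mathbb{Q}},M^\varphi_{\mathbb{Q}}$ are obtained from $R,R',M,M^\theta,M^\varphi$ by replacing $\sin,\cos$ by $\sin_{\mathbb{Q}},\cos_{\mathbb{Q}}$. A polyhedron is a finite non-degenerate set of points of $\mathbb{R}^3$ in convex position; pointsymmetric means $\mathcal{P}=-\mathcal{P}$; radius $1$ means all points have norm $\le1$ with equality for some. A $\kappa$-rational approximation of $\mathcal{P}=\{P_i\}$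 is a set $\widetilde{\mathcal{P}}=\{\widetilde P_i\}\subset\mathbb{Q}^3$ with $\|P_i-\widetilde P_i\|\le\kappa$ for each $i$. *)

From Stdlib Require Import Reals QArith Qreals.
Open Scope R_scope.

Definition vec3 : Type := (R * R * R)%type.
Definition vec2 : Type := (R * R)%type.

Definition v3x (v : vec3) : R := fst (fst v).
Definition v3y (v : vec3) : R := snd (fst v).
Definition v3z (v : vec3) : R := snd v.

Definition kappa : R := / (10 ^ 10).

Definition is_rat (x : R) : Prop := exists q : Q, x = Q2R q.
Definition is_rat3 (v : vec3) : Prop := is_rat (v3x v) /\ is_rat (v3y v) /\ is_rat (v3z v).
Definition is_rat2 (v : vec2) : Prop := is_rat (fst v) /\ is_rat (snd v).

Definition norm3 (v : vec3) : R := sqrt (v3x v ^ 2 + v3y v ^ 2 + v3z v ^ 2).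
Definition sub3 (u v : vec3) : vec3 := (v3x u - v3x v, v3y u - v3y v, v3z u - v3z v).
Definition opp3 (u : vec3) : vec3 := (- v3x u, - v3y u, - v3z u).
Definition dot2 (u v : vec2) : R := fst u * fst v + snd u * snd v.
Definition dist2 (u v : vec2) : R := sqrt ((fst u - fst v) ^ 2 + (snd u - snd v) ^ 2).

Fixpoint rsum (n : nat) (g : nat -> R) : R :=
  match n with O => 0 | S m => rsum m g + g m end.

Definition sinQ (x : R) : R :=
  sum_f_R0 (fun k => (-1) ^ k * x ^ (2 * k + 1) / INR (Factorial.fact (2 * k + 1))) 12.
Definition cosQ (x : R) : R :=
  sum_f_R0 (fun k => (-1) ^ k * x ^ (2 * k) / INR (Factorial.fact (2 * k))) 12.

Definition Rot_gen (sn cs : R -> R) (a : R) (v : vec2) : vec2 :=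
  (cs a * fst v - sn a * snd v, sn a * fst v + cs a * snd v).
Definition dRot_gen (sn cs : R -> R) (a : R) (v : vec2) : vec2 :=
  (- sn a * fst v - cs a * snd v, cs a * fst v - sn a * snd v).
Definition M_gen (sn cs : R -> R) (t p : R) (v : vec3) : vec2 :=
  (- sn t * v3x v + cs t * v3y v,
   - cs t * cs p * v3x v - sn t * cs p * v3y v + sn p * v3z v).
(* M^theta = d/dt M = [[-cos t, -sin t, 0], [sin t cos p, -cos t cos p, 0]] *)
Definition Mt_gen (sn cs : R -> R) (t p : R) (v : vec3) : vec2 :=
  (- cs t * v3x v - sn t * v3y v,
   sn t * cs p * v3x v - cs t * cs p * v3y v).
(* M^phi = d/dp M = [[0,0,0], [cos t sin p, sin t sin p, cos p]] *)
Definition Mp_gen (sn cs : R -> R) (t p : R) (v : vec3) : vec2 :=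
  (0, cs t * sn p * v3x v + sn t * sn p * v3y v + cs p * v3z v).

Definition Rot := Rot_gen sin cos.
Definition Mmat := M_gen sin cos.
Definition RotQ := Rot_gen sinQ cosQ.
Definition dRotQ := dRot_gen sinQ cosQ.
Definition MQ := M_gen sinQ cosQ.
Definition MtQ := Mt_gen sinQ cosQ.
Definition MpQ := Mp_gen sinQ cosQ.

(* A finite point set is given as an indexed family P 0, ..., P (n-1). *)
Definition in_conv3_except (n : nat) (P : nat -> vec3) (i : nat) (x : vec3) : Prop :=
  exists l : nat -> R,
    (forall j, (j < n)%nat -> 0 <= l j) /\ l i = 0 /\ rsum n l = 1 /\
    v3x x = rsum n (fun j => l j * v3x (P j)) /\
    v3y x = rsum n (fun j => l j * v3y (P j)) /\
    v3z x = rsum n (fun j => l j * v3z (P j)).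

Definition in_conv2 (n : nat) (Q : nat -> vec2) (x : vec2) : Prop :=
  exists l : nat -> R,
    (forall j, (j < n)%nat -> 0 <= l j) /\ rsum n l = 1 /\
    fst x = rsum n (fun j => l j * fst (Q j)) /\
    snd x = rsum n (fun j => l j * snd (Q j)).

Definition in_int_conv2 (n : nat) (Q : nat -> vec2) (x : vec2) : Prop :=
  exists r, 0 < r /\ forall y, dist2 x y < r -> in_conv2 n Q y.

Definition polyhedron (n : nat) (P : nat -> vec3) : Prop :=
  (forall i j, (i < n)%nat -> (j < n)%nat -> P i = P j -> i = j) /\
  (~ exists a b c d : R, (a <> 0 \/ b <> 0 \/ c <> 0) /\
       forall i, (i < n)%nat -> a * v3x (P i) + b * v3y (P i) + c * v3z (P i) = d) /\
  (forall i, (i < n)%nat -> ~ in_conv3_except n P i (P i)).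

Definition pointsymmetric (n : nat) (P : nat -> vec3) : Prop :=
  forall i, (i < n)%nat -> exists j, (j < n)%nat /\ P j = opp3 (P i).

Definition radius_one (n : nat) (P : nat -> vec3) : Prop :=
  (forall i, (i < n)%nat -> norm3 (P i) <= 1) /\
  (exists i, (i < n)%nat /\ norm3 (P i) = 1).

Definition kappa_rat_approx (n : nat) (P Pt : nat -> vec3) : Prop :=
  forall i, (i < n)%nat -> is_rat3 (Pt i) /\ norm3 (sub3 (P i) (Pt i)) <= kappa.

Definition GQ (eps t1 p1 a : R) (S : vec3) (w : vec2) : R :=
  dot2 (RotQ a (MQ t1 p1 S)) w
  - eps * (Rabs (dot2 (dRotQ a (MQ t1 p1 S)) w)
           + Rabs (dot2 (RotQ a (MtQ t1 p1 S)) w)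
           + Rabs (dot2 (RotQ a (MpQ t1 p1 S)) w))
  - 9 / 2 * eps ^ 2 - 4 * kappa * (1 + 3 * eps).

Definition HQ (eps t2 p2 : R) (w : vec2) (P : vec3) : R :=
  dot2 (MQ t2 p2 P) w
  + eps * (Rabs (dot2 (MtQ t2 p2 P) w) + Rabs (dot2 (MpQ t2 p2 P) w))
  + 2 * eps ^ 2 + 3 * kappa * (1 + 2 * eps).

From Stdlib Require Import Reals QArith Qreals Lra Lia ZArith.
From Coquelicot Require Import Coquelicot.
Open Scope R_scope.

(* The map (alpha, theta, phi) |-> <R(alpha) M(theta, phi) S, w> has all second
   partial derivatives of the form <R(alpha') m S, w> with m a 2x3 matrix whose rows are orthogonal
   of norm <= 1, so they are bounded by |S| <= 1; a second-order Taylor expansion on the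
   eps-box around the rational centre bounds the map below by its first-order part minus
   9/2 eps^2.  Replacing S by its rational approximation costs kappa per term (same operator-norm
   bound), and replacing sin, cos by their truncated series on [-4, 4] costs at most 3 kappa
   (interval arithmetic with error 1.12e-11 per factor).  This gives G^Q <= <R(alpha) M1 S, w>,
   and in the same way <M2 P, w> <= H^Q_P for every vertex P.  Hence R(alpha) M1 S has a larger
   w-component than every vertex of M2 P and cannot lie in their convex hull. *)

Lemma MVT_closed (f df : R -> R) (a b : R) : a <= b ->
  (forall t, is_derive f t (df t)) ->
  exists c, a <= c <= b /\ f b - f a = df c * (b - a).
Proof.
  intros Hab Hd.
  destruct (MVT_gen f a b df) as [c [Hc He]].
  - intros; apply Hd.
  - intros x _. apply derivable_continuous_pt.
    exists (df x). apply is_derive_Reals, Hd.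
  - exists c; split; [|exact He].
    rewrite Rmin_left in Hc by lra; rewrite Rmax_right in Hc by lra; exact Hc.
Qed.

Lemma derive_nonneg_le (h dh : R -> R) x : 0 <= x ->
  (forall t, is_derive h t (dh t)) -> (forall t, 0 <= t <= x -> 0 <= dh t) ->
  h 0 <= h x.
Proof.
  intros Hx Hd Hpos. destruct (MVT_closed h dh 0 x Hx Hd) as [c [Hc E]].
  pose proof (Hpos c Hc). nra.
Qed.

Lemma taylor1_remainder_le (g g1 g2 : R -> R) (K : R) :
  (forall t, is_derive g t (g1 t)) -> (forall t, is_derive g1 t (g2 t)) ->
  (forall t, 0 <= t <= 1 -> Rabs (g2 t) <= K) ->
  Rabs (g 1 - g 0 - g1 0) <= K / 2.
Proof.
  intros Hg Hg1 HK.
  assert (Hslope : forall c, 0 <= c <= 1 -> Rabs (g1 c - g1 0) <= K * c).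
  { intros c Hc. destruct (MVT_closed g1 g2 0 c) as [c' [Hc' E]]; try lra; auto.
    rewrite E, Rabs_mult, Rminus_0_r, (Rabs_right c) by lra.
    apply Rmult_le_compat_r; [lra | apply HK; lra]. }
  (* the mean value theorem for g - t g1(0) +- K t^2 / 2 gives both inequalities *)
  assert (Hd : forall sg t, is_derive (fun t => g t - t * g1 0 + sg * K * t ^ 2 / 2) t
                                      (g1 t - g1 0 + sg * K * t)).
  { intros sg t. auto_derive; [eexists; apply Hg |].
    replace (Derive (fun x => g x) t) with (g1 t) by (symmetry; apply is_derive_unique, Hg).
    field. }
  destruct (MVT_closed _ _ 0 1 Rle_0_1 (Hd 1)) as [c [Hc E1]].
  destruct (MVT_closed _ _ 0 1 Rle_0_1 (Hd (-1))) as [d [Hd' E2]].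
  pose proof (Hslope c Hc) as Hc1. pose proof (Hslope d Hd') as Hd1.
  apply Rabs_le_between in Hc1. apply Rabs_le_between in Hd1.
  apply Rabs_le_between. simpl in E1, E2. split; nra.
Qed.

Lemma Rabs_le_sqrt x N : x ^ 2 <= N -> Rabs x <= sqrt N.
Proof.
  intro H. rewrite <- sqrt_Rsqr_abs. apply sqrt_le_1_alt. rewrite Rsqr_pow2; exact H.
Qed.

Lemma Rabs_mul_le c x N : Rabs x <= N -> Rabs (c * x) <= Rabs c * N.
Proof. intro H. rewrite Rabs_mult. apply Rmult_le_compat_l; [apply Rabs_pos | exact H]. Qed.

Lemma Rabs_sub_le_add x y z e1 e2 :
  Rabs (x - y) <= e1 -> Rabs (y - z) <= e2 -> Rabs (x - z) <= e1 + e2.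
Proof.
  intros H1 H2. replace (x - z) with ((x - y) + (y - z)) by ring.
  eapply Rle_trans; [apply Rabs_triang | lra].
Qed.

Lemma Rabs_quad_form_le (x y z X Y Z U V W N : R) :
  Rabs X <= N -> Rabs Y <= N -> Rabs Z <= N ->
  Rabs U <= N -> Rabs V <= N -> Rabs W <= N ->
  Rabs (x * x * X + y * y * Y + z * z * Z + 2 * x * y * U + 2 * x * z * V + 2 * y * z * W)
  <= (Rabs x + Rabs y + Rabs z) ^ 2 * N.
Proof.
  intros HX HY HZ HU HV HW.
  pose proof (Rabs_mul_le (x * x) _ _ HX) as H1. pose proof (Rabs_mul_le (y * y) _ _ HY) as H2.
  pose proof (Rabs_mul_le (z * z) _ _ HZ) as H3. pose proof (Rabs_mul_le (2 * x * y) _ _ HU) as H4.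
  pose proof (Rabs_mul_le (2 * x * z) _ _ HV) as H5. pose proof (Rabs_mul_le (2 * y * z) _ _ HW) as H6.
  apply Rabs_le_between in H1, H2, H3, H4, H5, H6.
  repeat match goal with H : context [Rabs (?a * ?b)] |- _ => rewrite (Rabs_mult a b) in H end.
  rewrite (Rabs_right 2) in H4, H5, H6 by lra.
  replace ((Rabs x + Rabs y + Rabs z) ^ 2 * N) with
    (Rabs x * Rabs x * N + Rabs y * Rabs y * N + Rabs z * Rabs z * N + 2 * Rabs x * Rabs y * N
     + 2 * Rabs x * Rabs z * N + 2 * Rabs y * Rabs z * N) by ring.
  apply Rabs_le_between. lra.
Qed.

Definition dot3 (u v : vec3) : R := v3x u * v3x v + v3y u * v3y v + v3z u * v3z v.
Definition sqnorm3 (v : vec3) : R := v3x v ^ 2 + v3y v ^ 2 + v3z v ^ 2.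
Definition unit2 (w : vec2) : Prop := fst w ^ 2 + snd w ^ 2 = 1.

Lemma sqnorm3_ge0 v : 0 <= sqnorm3 v.
Proof.
  unfold sqnorm3.
  pose proof (pow2_ge_0 (v3x v)); pose proof (pow2_ge_0 (v3y v)); pose proof (pow2_ge_0 (v3z v)).
  lra.
Qed.

Lemma dot3_sq_le u v : dot3 u v ^ 2 <= sqnorm3 u * sqnorm3 v.
Proof.
  (* Lagrange's identity *)
  assert (E : sqnorm3 u * sqnorm3 v - dot3 u v ^ 2
              = (v3x u * v3y v - v3y u * v3x v) ^ 2 + (v3x u * v3z v - v3z u * v3x v) ^ 2
                + (v3y u * v3z v - v3z u * v3y v) ^ 2) by (unfold sqnorm3, dot3; ring).
  pose proof (pow2_ge_0 (v3x u * v3y v - v3y u * v3x v)).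
  pose proof (pow2_ge_0 (v3x u * v3z v - v3z u * v3x v)).
  pose proof (pow2_ge_0 (v3y u * v3z v - v3z u * v3y v)).
  lra.
Qed.

Lemma Rabs_dot3_le u v : sqnorm3 u <= 1 -> Rabs (dot3 u v) <= norm3 v.
Proof.
  intro Hu. apply Rabs_le_sqrt. pose proof (dot3_sq_le u v). pose proof (sqnorm3_ge0 v).
  fold (sqnorm3 v). nra.
Qed.

Lemma abs_coords_le_norm3 v :
  Rabs (v3x v) <= norm3 v /\ Rabs (v3y v) <= norm3 v /\ Rabs (v3z v) <= norm3 v.
Proof.
  pose proof (pow2_ge_0 (v3x v)); pose proof (pow2_ge_0 (v3y v)); pose proof (pow2_ge_0 (v3z v)).
  repeat split; apply Rabs_le_sqrt; lra.
Qed.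

Definition has_orth_rows (m : vec3 -> vec2) : Prop :=
  exists r1 r2 : vec3, (forall v, m v = (dot3 r1 v, dot3 r2 v)) /\
    sqnorm3 r1 <= 1 /\ sqnorm3 r2 <= 1 /\ dot3 r1 r2 = 0.

Lemma orth_rows_dot2_le m u v : has_orth_rows m -> unit2 u -> Rabs (dot2 (m v) u) <= norm3 v.
Proof.
  intros [r1 [r2 [Hm [H1 [H2 H12]]]]] Hu. rewrite Hm.
  set (r := (fst u * v3x r1 + snd u * v3x r2, fst u * v3y r1 + snd u * v3y r2,
             fst u * v3z r1 + snd u * v3z r2) : vec3).
  replace (dot2 _ u) with (dot3 r v) by (unfold r, dot2, dot3, v3x, v3y, v3z; simpl; ring).
  apply Rabs_dot3_le.
  replace (sqnorm3 r) with (fst u ^ 2 * sqnorm3 r1 + snd u ^ 2 * sqnorm3 r2 + 2 * fst u * snd u * dot3 r1 r2)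
    by (unfold r, sqnorm3, dot3, v3x, v3y, v3z; simpl; ring).
  unfold unit2 in Hu. rewrite H12.
  pose proof (pow2_ge_0 (fst u)); pose proof (pow2_ge_0 (snd u)). nra.
Qed.

Lemma orth_rows_sub3 m u v : has_orth_rows m ->
  m (sub3 u v) = (fst (m u) - fst (m v), snd (m u) - snd (m v)).
Proof.
  intros [r1 [r2 [Hm _]]]. rewrite !Hm. unfold dot3, sub3, v3x, v3y, v3z; simpl. f_equal; ring.
Qed.

Definition dRot : R -> vec2 -> vec2 := dRot_gen sin cos.

Lemma dot2_Rot a v w : dot2 (Rot a v) w = dot2 v (Rot (- a) w).
Proof. unfold dot2, Rot, Rot_gen; simpl. rewrite sin_neg, cos_neg. ring. Qed.

Lemma Rot_unit2 a w : unit2 w -> unit2 (Rot a w).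
Proof.
  unfold unit2, Rot, Rot_gen; cbn [fst snd]. intro Hw. pose proof (sin2_cos2 a) as E. unfold Rsqr in E.
  replace 1 with ((sin a * sin a + cos a * cos a) * (fst w ^ 2 + snd w ^ 2)) by (rewrite E, Hw; ring).
  ring.
Qed.

Lemma Rot_0 v : Rot 0 v = v.
Proof. destruct v. unfold Rot, Rot_gen; simpl. rewrite sin_0, cos_0. f_equal; ring. Qed.

Lemma dRot_Rot a v : dRot a v = Rot (a + PI / 2) v.
Proof.
  unfold dRot, dRot_gen, Rot, Rot_gen. rewrite sin_plus, cos_plus, sin_PI2, cos_PI2.
  f_equal; ring.
Qed.

Lemma Rot_orth_rows_le a m v w : has_orth_rows m -> unit2 w ->
  Rabs (dot2 (Rot a (m v)) w) <= norm3 v.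
Proof. intros Hm Hw. rewrite dot2_Rot. apply orth_rows_dot2_le, Rot_unit2; assumption. Qed.

Lemma dRot_orth_rows_le a m v w : has_orth_rows m -> unit2 w ->
  Rabs (dot2 (dRot a (m v)) w) <= norm3 v.
Proof. rewrite dRot_Rot. apply Rot_orth_rows_le. Qed.

Lemma Rot_orth_rows_lipschitz a m u v w : has_orth_rows m -> unit2 w ->
  Rabs (dot2 (Rot a (m u)) w - dot2 (Rot a (m v)) w) <= norm3 (sub3 u v).
Proof.
  intros Hm Hw.
  replace (_ - _) with (dot2 (Rot a (m (sub3 u v))) w)
    by (rewrite orth_rows_sub3 by exact Hm; unfold dot2, Rot, Rot_gen; simpl; ring).
  apply Rot_orth_rows_le; assumption.
Qed.

Lemma dRot_orth_rows_lipschitz a m u v w : has_orth_rows m -> unit2 w ->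
  Rabs (dot2 (dRot a (m u)) w - dot2 (dRot a (m v)) w) <= norm3 (sub3 u v).
Proof. rewrite !dRot_Rot. apply Rot_orth_rows_lipschitz. Qed.

Definition Mt : R -> R -> vec3 -> vec2 := Mt_gen sin cos.
Definition Mp : R -> R -> vec3 -> vec2 := Mp_gen sin cos.
Definition Mtt (t p : R) (v : vec3) : vec2 :=
  (sin t * v3x v - cos t * v3y v, cos t * cos p * v3x v + sin t * cos p * v3y v).
Definition Mtp (t p : R) (v : vec3) : vec2 :=
  (0, - sin t * sin p * v3x v + cos t * sin p * v3y v).
Definition Mpp (t p : R) (v : vec3) : vec2 :=
  (0, cos t * cos p * v3x v + sin t * cos p * v3y v - sin p * v3z v).

Ltac orth_rows_tac t p r1 r2 :=
  exists r1, r2; split;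
  [ intro v; unfold Mmat, M_gen, Mt, Mt_gen, Mp, Mp_gen, Mtt, Mtp, Mpp, dot3, v3x, v3y, v3z;
    cbn [fst snd]; f_equal; ring
  | unfold sqnorm3, dot3, v3x, v3y, v3z; cbn [fst snd];
    pose proof (sin2_cos2 t) as Ht; pose proof (sin2_cos2 p) as Hp; unfold Rsqr in Ht, Hp;
    pose proof (pow2_ge_0 (sin p)); pose proof (pow2_ge_0 (cos p));
    repeat split; nra ].

Lemma M_orth_rows t p : has_orth_rows (Mmat t p).
Proof. orth_rows_tac t p (- sin t, cos t, 0) (- cos t * cos p, - sin t * cos p, sin p). Qed.

Lemma Mt_orth_rows t p : has_orth_rows (Mt t p).
Proof. orth_rows_tac t p (- cos t, - sin t, 0) (sin t * cos p, - cos t * cos p, 0). Qed.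

Lemma Mp_orth_rows t p : has_orth_rows (Mp t p).
Proof. orth_rows_tac t p (0, 0, 0) (cos t * sin p, sin t * sin p, cos p). Qed.

Lemma Mtt_orth_rows t p : has_orth_rows (Mtt t p).
Proof. orth_rows_tac t p (sin t, - cos t, 0) (cos t * cos p, sin t * cos p, 0). Qed.

Lemma Mtp_orth_rows t p : has_orth_rows (Mtp t p).
Proof. orth_rows_tac t p (0, 0, 0) (- sin t * sin p, cos t * sin p, 0). Qed.

Lemma Mpp_orth_rows t p : has_orth_rows (Mpp t p).
Proof. orth_rows_tac t p (0, 0, 0) (cos t * cos p, sin t * cos p, - sin p). Qed.

Section Taylor.
Variables (a t p da dt dp : R) (S : vec3) (w : vec2).

Let form (r : R -> vec2 -> vec2) (m : R -> R -> vec3 -> vec2) (x : R) : R :=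
  dot2 (r (a + x * da) (m (t + x * dt) (p + x * dp) S)) w.
Let path x := form Rot Mmat x.
Let path' x := da * form dRot Mmat x + dt * form Rot Mt x + dp * form Rot Mp x.
Let path'' x := da * da * (- form Rot Mmat x) + dt * dt * form Rot Mtt x
  + dp * dp * form Rot Mpp x + 2 * da * dt * form dRot Mt x + 2 * da * dp * form dRot Mp x
  + 2 * dt * dp * form Rot Mtp x.

Let path_derive x : is_derive path x (path' x).
Proof.
  unfold path, path', form, dot2, Rot, Rot_gen, dRot, dRot_gen, Mmat, M_gen, Mt, Mt_gen, Mp, Mp_gen.
  cbn [fst snd]. auto_derive; [trivial | ring].
Qed.

Let path'_derive x : is_derive path' x (path'' x).
Proof.
  unfold path', path'', form, dot2, Rot, Rot_gen, dRot, dRot_gen, Mmat, M_gen, Mt, Mt_gen, Mp, Mp_gen,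
    Mtt, Mtp, Mpp.
  cbn [fst snd]. auto_derive; [trivial | ring].
Qed.

Let path''_bound : unit2 w -> forall x, Rabs (path'' x) <= (Rabs da + Rabs dt + Rabs dp) ^ 2 * norm3 S.
Proof.
  intros Hw x. unfold path''. apply Rabs_quad_form_le; unfold form;
    [rewrite Rabs_Ropp; apply Rot_orth_rows_le | apply Rot_orth_rows_le | apply Rot_orth_rows_le
    | apply dRot_orth_rows_le | apply dRot_orth_rows_le | apply Rot_orth_rows_le];
    auto using M_orth_rows, Mt_orth_rows, Mp_orth_rows, Mtt_orth_rows, Mtp_orth_rows, Mpp_orth_rows.
Qed.

Lemma Rot_M_taylor : unit2 w ->
  Rabs (dot2 (Rot (a + da) (Mmat (t + dt) (p + dp) S)) w - dot2 (Rot a (Mmat t p S)) w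
        - (da * dot2 (dRot a (Mmat t p S)) w + dt * dot2 (Rot a (Mt t p S)) w
           + dp * dot2 (Rot a (Mp t p S)) w))
  <= (Rabs da + Rabs dt + Rabs dp) ^ 2 * norm3 S / 2.
Proof.
  intro Hw.
  pose proof (taylor1_remainder_le path path' path'' _ path_derive path'_derive
                (fun x _ => path''_bound Hw x)) as H.
  unfold path, path', form in H. rewrite !Rmult_1_l, !Rmult_0_l, !Rplus_0_r in H. exact H.
Qed.

End Taylor.

Fixpoint fact_Z (n : nat) : Z :=
  match n with O => 1%Z | S m => (Z.of_nat (S m) * fact_Z m)%Z end.

Lemma INR_fact_Z n : INR (fact n) = IZR (fact_Z n).
Proof.
  induction n as [|n IHn]; [reflexivity |].
  change (fact (S n)) with (S n * fact n)%nat. rewrite mult_INR, IHn.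
  change (fact_Z (S n)) with (Z.of_nat (S n) * fact_Z n)%Z. rewrite mult_IZR, <- INR_IZR_INZ.
  reflexivity.
Qed.

(* Bounds 4^26/26! and 4^27/27!, the first omitted terms of cosQ and sinQ on [-4, 4]. *)
Definition trig_err : R := 112 / 10000000000000.

Lemma pow_div_fact_le x n : 0 <= x <= 4 -> x ^ n / INR (fact n) <= 4 ^ n / INR (fact n).
Proof.
  intro Hx. apply Rmult_le_compat_r.
  - left; apply Rinv_0_lt_compat, INR_fact_lt_0.
  - apply pow_incr; exact Hx.
Qed.

Lemma pow4_26_div_fact : 4 ^ 26 / INR (fact 26) <= trig_err.
Proof.
  rewrite INR_fact_Z. unfold trig_err.
  replace (fact_Z 26) with 403291461126605635584000000%Z by (vm_compute; reflexivity).
  lra.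
Qed.

Lemma pow4_27_div_fact : 4 ^ 27 / INR (fact 27) <= trig_err.
Proof.
  rewrite INR_fact_Z. unfold trig_err.
  replace (fact_Z 27) with 10888869450418352160768000000%Z by (vm_compute; reflexivity).
  lra.
Qed.

Lemma derive_pow_div_fact n x :
  is_derive (fun y => y ^ S n / INR (fact (S n))) x (x ^ n / INR (fact n)).
Proof.
  auto_derive; [trivial |].
  change (match n with 0%nat => 1 | S _ => INR n + 1 end) with (INR (S n)).
  rewrite plus_INR, mult_INR, S_INR.
  pose proof (INR_fact_neq_0 n). pose proof (pos_INR n).
  field. split; [assumption | nra].
Qed.

Lemma derive_cos_term k x : is_derive (fun y => cos_term y (S k)) x (- sin_term x k).
Proof.
  unfold cos_term, sin_term.
  replace (2 * S k)%nat with (S (2 * k + 1)) by lia.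
  replace (- ((-1) ^ k * (x ^ (2 * k + 1) / INR (fact (2 * k + 1)))))
    with ((-1) ^ S k * (x ^ (2 * k + 1) / INR (fact (2 * k + 1)))) by (simpl; ring).
  apply is_derive_scal, derive_pow_div_fact.
Qed.

Lemma derive_cos_approx m x : is_derive (fun y => cos_approx y (S m)) x (- sin_approx x m).
Proof.
  induction m as [|m IHm].
  - change (fun y => cos_approx y 1) with (fun y => cos_term y 0 + cos_term y 1).
    replace (- sin_approx x 0) with (0 + - sin_term x 0) by (unfold sin_approx; simpl; ring).
    apply (is_derive_plus (fun y => cos_term y 0)); [| apply derive_cos_term].
    unfold cos_term. auto_derive; [trivial | ring].
  - change (fun y => cos_approx y (S (S m)))
      with (fun y => cos_approx y (S m) + cos_term y (S (S m))).
    replace (- sin_approx x (S m)) with (- sin_approx x m + - sin_term x (S m))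
      by (unfold sin_approx; simpl; ring).
    apply (is_derive_plus (fun y => cos_approx y (S m))); [exact IHm | apply derive_cos_term].
Qed.

Lemma cos_approx_0 n : cos_approx 0 n = 1.
Proof.
  unfold cos_approx, cos_term. induction n as [|n IHn].
  - simpl. field.
  - rewrite tech5, IHn, pow_i by lia. unfold Rdiv; ring.
Qed.

Lemma cos_approx_bounds x : 0 <= x <= 4 -> cos_approx x 13 <= cos x <= cos_approx x 12.
Proof.
  intro Hx.
  assert (Hsin : forall y, 0 <= y <= x -> sin_approx y 11 <= sin y <= sin_approx y 12)
    by (intros y Hy; apply (pre_sin_bound y 5); lra).
  split.
  - enough (cos 0 - cos_approx 0 13 <= cos x - cos_approx x 13)
      by (rewrite cos_0, cos_approx_0 in *; lra).
    apply (derive_nonneg_le (fun y => cos y - cos_approx y 13)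
             (fun y => - sin y - - sin_approx y 12)); [lra | |].
    + intro y. apply (is_derive_minus cos); [apply is_derive_cos | apply derive_cos_approx].
    + intros y Hy. pose proof (Hsin y Hy). lra.
  - enough (cos_approx 0 12 - cos 0 <= cos_approx x 12 - cos x)
      by (rewrite cos_0, cos_approx_0 in *; lra).
    apply (derive_nonneg_le (fun y => cos_approx y 12 - cos y)
             (fun y => - sin_approx y 11 - - sin y)); [lra | |].
    + intro y. apply (is_derive_minus (fun y => cos_approx y 12));
        [apply derive_cos_approx | apply is_derive_cos].
    + intros y Hy. pose proof (Hsin y Hy). lra.
Qed.

Lemma sin_approx_err x : 0 <= x <= 4 -> Rabs (sin x - sin_approx x 12) <= trig_err.
Proof.
  intro Hx.
  pose proof (pre_sin_bound x 6 (proj1 Hx) (proj2 Hx)) as [Hlo _].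
  pose proof (pre_sin_bound x 5 (proj1 Hx) (proj2 Hx)) as [_ Hhi].
  change (sin_approx x (2 * 6 + 1)) with (sin_approx x 12 + sin_term x 13) in Hlo.
  change (2 * (5 + 1))%nat with 12%nat in Hhi.
  unfold sin_term in Hlo. change (2 * 13 + 1)%nat with 27%nat in Hlo.
  replace ((-1) ^ 13) with (-1) in Hlo by ring.
  pose proof (pow_div_fact_le x 27 Hx). pose proof pow4_27_div_fact.
  apply Rabs_le_between. lra.
Qed.

Lemma cos_approx_err x : 0 <= x <= 4 -> Rabs (cos x - cos_approx x 12) <= trig_err.
Proof.
  intro Hx. pose proof (cos_approx_bounds x Hx) as [Hlo Hhi].
  change (cos_approx x 13) with (cos_approx x 12 + cos_term x 13) in Hlo.
  unfold cos_term in Hlo. change (2 * 13)%nat with 26%nat in Hlo.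
  replace ((-1) ^ 13) with (-1) in Hlo by ring.
  pose proof (pow_div_fact_le x 26 Hx). pose proof pow4_26_div_fact.
  apply Rabs_le_between. lra.
Qed.

Lemma pow_even_opp x k : (- x) ^ (2 * k) = x ^ (2 * k).
Proof. rewrite !pow_mult. f_equal. ring. Qed.

Lemma cos_approx_opp x n : cos_approx (- x) n = cos_approx x n.
Proof.
  unfold cos_approx. apply sum_eq. intros k _. unfold cos_term. rewrite pow_even_opp. reflexivity.
Qed.

Lemma sin_approx_opp x n : sin_approx (- x) n = - sin_approx x n.
Proof.
  assert (Hterm : forall k, sin_term (- x) k = - sin_term x k)
    by (intro k; unfold sin_term; rewrite !pow_add, pow_even_opp; unfold Rdiv; ring).
  unfold sin_approx. induction n as [|n IHn]; [apply Hterm | rewrite !tech5, IHn, Hterm; ring].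
Qed.

Lemma sinQ_sin_approx x : sinQ x = sin_approx x 12.
Proof. unfold sinQ, sin_approx. apply sum_eq. intros k _. unfold sin_term, Rdiv. ring. Qed.

Lemma cosQ_cos_approx x : cosQ x = cos_approx x 12.
Proof. unfold cosQ, cos_approx. apply sum_eq. intros k _. unfold cos_term, Rdiv. ring. Qed.

Lemma sinQ_err x : -4 <= x <= 4 -> Rabs (sin x - sinQ x) <= trig_err.
Proof.
  intro Hx. rewrite sinQ_sin_approx. destruct (Rle_dec 0 x).
  - apply sin_approx_err; lra.
  - replace x with (- (- x)) by ring. rewrite sin_neg, sin_approx_opp, <- Rabs_Ropp.
    replace (- (- sin (- x) - - sin_approx (- x) 12)) with (sin (- x) - sin_approx (- x) 12) by ring.
    apply sin_approx_err; lra.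
Qed.

Lemma cosQ_err x : -4 <= x <= 4 -> Rabs (cos x - cosQ x) <= trig_err.
Proof.
  intro Hx. rewrite cosQ_cos_approx. destruct (Rle_dec 0 x).
  - apply cos_approx_err; lra.
  - replace x with (- (- x)) by ring. rewrite cos_neg, cos_approx_opp.
    apply cos_approx_err; lra.
Qed.

Definition approx (m e x y : R) : Prop := Rabs x <= m /\ Rabs (x - y) <= e.

Lemma approx_0 : approx 0 0 0 0.
Proof. split; rewrite ?Rminus_0_r, Rabs_R0; lra. Qed.

Lemma approx_opp m e x y : approx m e x y -> approx m e (- x) (- y).
Proof.
  intros [Hx Hxy]. split; [now rewrite Rabs_Ropp |].
  replace (- x - - y) with (- (x - y)) by ring. now rewrite Rabs_Ropp.
Qed.

Lemma approx_add m1 e1 x1 y1 m2 e2 x2 y2 :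
  approx m1 e1 x1 y1 -> approx m2 e2 x2 y2 -> approx (m1 + m2) (e1 + e2) (x1 + x2) (y1 + y2).
Proof.
  intros [Hx1 Hxy1] [Hx2 Hxy2]. split.
  - eapply Rle_trans; [apply Rabs_triang | lra].
  - replace (x1 + x2 - (y1 + y2)) with ((x1 - y1) + (x2 - y2)) by ring.
    eapply Rle_trans; [apply Rabs_triang | lra].
Qed.

Lemma approx_sub m1 e1 x1 y1 m2 e2 x2 y2 :
  approx m1 e1 x1 y1 -> approx m2 e2 x2 y2 -> approx (m1 + m2) (e1 + e2) (x1 - x2) (y1 - y2).
Proof. intros H1 H2. apply approx_add; [exact H1 | apply approx_opp, H2]. Qed.

Lemma approx_mul m1 e1 x1 y1 m2 e2 x2 y2 :
  approx m1 e1 x1 y1 -> approx m2 e2 x2 y2 ->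
  approx (m1 * m2) (m1 * e2 + e1 * m2 + e1 * e2) (x1 * x2) (y1 * y2).
Proof.
  intros [Hx1 Hxy1] [Hx2 Hxy2]. split.
  - rewrite Rabs_mult. apply Rmult_le_compat; auto using Rabs_pos.
  - replace (x1 * x2 - y1 * y2) with (x1 * (x2 - y2) + (x1 - y1) * x2 - (x1 - y1) * (x2 - y2))
      by ring.
    unfold Rminus at 1. eapply Rle_trans; [apply Rabs_triang |].
    eapply Rle_trans; [apply Rplus_le_compat_r, Rabs_triang |].
    rewrite Rabs_Ropp, !Rabs_mult.
    pose proof (Rabs_pos x1); pose proof (Rabs_pos x2).
    pose proof (Rabs_pos (x1 - y1)); pose proof (Rabs_pos (x2 - y2)).
    apply Rplus_le_compat; [apply Rplus_le_compat |]; apply Rmult_le_compat; auto.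
Qed.

Lemma approx_err_le m e b x y : approx m e x y -> e <= b -> Rabs (x - y) <= b.
Proof. intros [_ H] Hb. lra. Qed.

Ltac approx_tac :=
  first
  [ eassumption
  | apply approx_0
  | eapply approx_mul; approx_tac
  | eapply approx_sub; approx_tac
  | eapply approx_add; approx_tac
  | eapply approx_opp; approx_tac ].


Lemma approx_refl m x : Rabs x <= m -> approx m 0 x x.
Proof. intro H. split; [exact H | rewrite Rminus_diag, Rabs_R0; lra]. Qed.

Lemma trig_approx u : -4 <= u <= 4 ->
  approx 1 trig_err (sin u) (sinQ u) /\ approx 1 trig_err (cos u) (cosQ u).
Proof.
  intro Hu. split; split; auto using sinQ_err, cosQ_err.
  - apply Rabs_le, SIN_bound.
  - apply Rabs_le, COS_bound.
Qed.

Lemma coords_approx S St : norm3 S <= 1 -> norm3 (sub3 S St) <= kappa ->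
  approx (1 + kappa) 0 (v3x St) (v3x St) /\ approx (1 + kappa) 0 (v3y St) (v3y St) /\
  approx (1 + kappa) 0 (v3z St) (v3z St).
Proof.
  intros HS HSt.
  destruct (abs_coords_le_norm3 S) as [Hx [Hy Hz]].
  destruct (abs_coords_le_norm3 (sub3 S St)) as [Dx [Dy Dz]].
  assert (Hcoord : forall c c', Rabs c <= norm3 S -> Rabs (c - c') <= norm3 (sub3 S St) ->
            approx (1 + kappa) 0 c' c').
  { intros c c' Hc Hcc'. apply approx_refl.
    replace c' with (c - (c - c')) by ring.
    eapply Rle_trans; [apply Rabs_triang | rewrite Rabs_Ropp; lra]. }
  split; [| split]; [apply (Hcoord (v3x S)) | apply (Hcoord (v3y S)) | apply (Hcoord (v3z S))];
    assumption.
Qed.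

Lemma unit2_coords_approx w : unit2 w -> approx 1 0 (fst w) (fst w) /\ approx 1 0 (snd w) (snd w).
Proof.
  intro Hw. pose proof (pow2_ge_0 (fst w)); pose proof (pow2_ge_0 (snd w)).
  split; apply approx_refl; rewrite <- sqrt_1; apply Rabs_le_sqrt; unfold unit2 in Hw; lra.
Qed.

(* sin and cos are kept abstract here so that [approx_tac] never tries to unfold them. *)
Section TrigError.
Variables (sn cs sn' cs' : R -> R).
Hypothesis Htrig : forall u, -4 <= u <= 4 ->
  approx 1 trig_err (sn u) (sn' u) /\ approx 1 trig_err (cs u) (cs' u).
Variables (a t p : R) (v : vec3) (w : vec2).
Hypotheses (Ha : -4 <= a <= 4) (Ht : -4 <= t <= 4) (Hp : -4 <= p <= 4) (Hw : unit2 w)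
  (Hv : approx (1 + kappa) 0 (v3x v) (v3x v) /\ approx (1 + kappa) 0 (v3y v) (v3y v) /\
        approx (1 + kappa) 0 (v3z v) (v3z v)).

Ltac trig_err_tac :=
  unfold dot2, Rot_gen, dRot_gen, M_gen, Mt_gen, Mp_gen; cbn [fst snd];
  eapply approx_err_le; [approx_tac | unfold trig_err, kappa; lra].

Lemma Rot_M_trig_err :
  let err r m := Rabs (dot2 (r sn cs a (m sn cs t p v)) w
                       - dot2 (r sn' cs' a (m sn' cs' t p v)) w) <= 3 * kappa in
  err Rot_gen M_gen /\ err dRot_gen M_gen /\ err Rot_gen Mt_gen /\ err Rot_gen Mp_gen.
Proof.
  destruct (Htrig a Ha), (Htrig t Ht), (Htrig p Hp), Hv as [? [? ?]], (unit2_coords_approx w Hw).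
  repeat split; trig_err_tac.
Qed.

Lemma M_trig_err :
  let err m := Rabs (dot2 (m sn cs t p v) w - dot2 (m sn' cs' t p v) w) <= 2 * kappa in
  err M_gen /\ err Mt_gen /\ err Mp_gen.
Proof.
  destruct (Htrig t Ht), (Htrig p Hp), Hv as [? [? ?]], (unit2_coords_approx w Hw).
  repeat split; trig_err_tac.
Qed.

End TrigError.

Lemma Rot_M_forms_err t p a S St w :
  unit2 w -> norm3 S <= 1 -> norm3 (sub3 S St) <= kappa ->
  -4 <= t <= 4 -> -4 <= p <= 4 -> -4 <= a <= 4 ->
  Rabs (dot2 (Rot a (Mmat t p S)) w - dot2 (RotQ a (MQ t p St)) w) <= 4 * kappa /\
  Rabs (dot2 (dRot a (Mmat t p S)) w - dot2 (dRotQ a (MQ t p St)) w) <= 4 * kappa /\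
  Rabs (dot2 (Rot a (Mt t p S)) w - dot2 (RotQ a (MtQ t p St)) w) <= 4 * kappa /\
  Rabs (dot2 (Rot a (Mp t p S)) w - dot2 (RotQ a (MpQ t p St)) w) <= 4 * kappa.
Proof.
  intros Hw HS HSt Ht Hp Ha.
  destruct (Rot_M_trig_err sin cos sinQ cosQ trig_approx a t p St w Ha Ht Hp Hw
              (coords_approx S St HS HSt)) as [eV [eA [eT eP]]].
  assert (Hlip : forall m, has_orth_rows m ->
            Rabs (dot2 (Rot a (m S)) w - dot2 (Rot a (m St)) w) <= kappa /\
            Rabs (dot2 (dRot a (m S)) w - dot2 (dRot a (m St)) w) <= kappa).
  { intros m Hm. split; eapply Rle_trans; try exact HSt;
      [apply Rot_orth_rows_lipschitz | apply dRot_orth_rows_lipschitz]; assumption. }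
  replace (4 * kappa) with (kappa + 3 * kappa) by ring.
  split; [| split; [| split]]; eapply Rabs_sub_le_add.
  - exact (proj1 (Hlip _ (M_orth_rows t p))).
  - exact eV.
  - exact (proj2 (Hlip _ (M_orth_rows t p))).
  - exact eA.
  - exact (proj1 (Hlip _ (Mt_orth_rows t p))).
  - exact eT.
  - exact (proj1 (Hlip _ (Mp_orth_rows t p))).
  - exact eP.
Qed.

Lemma M_forms_err t p S St w :
  unit2 w -> norm3 S <= 1 -> norm3 (sub3 S St) <= kappa -> -4 <= t <= 4 -> -4 <= p <= 4 ->
  Rabs (dot2 (Mmat t p S) w - dot2 (MQ t p St) w) <= 3 * kappa /\
  Rabs (dot2 (Mt t p S) w - dot2 (MtQ t p St) w) <= 3 * kappa /\
  Rabs (dot2 (Mp t p S) w - dot2 (MpQ t p St) w) <= 3 * kappa.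
Proof.
  intros Hw HS HSt Ht Hp.
  destruct (M_trig_err sin cos sinQ cosQ trig_approx t p St w Ht Hp Hw
              (coords_approx S St HS HSt)) as [eV [eT eP]].
  assert (Hlip : forall m, has_orth_rows m -> Rabs (dot2 (m S) w - dot2 (m St) w) <= kappa).
  { intros m Hm. rewrite <- (Rot_0 (m S)), <- (Rot_0 (m St)).
    eapply Rle_trans; [apply Rot_orth_rows_lipschitz; assumption | exact HSt]. }
  replace (3 * kappa) with (kappa + 2 * kappa) by ring.
  split; [| split]; eapply Rabs_sub_le_add.
  - exact (Hlip _ (M_orth_rows t p)).
  - exact eV.
  - exact (Hlip _ (Mt_orth_rows t p)).
  - exact eT.
  - exact (Hlip _ (Mp_orth_rows t p)).
  - exact eP.
Qed.

Lemma Rabs_mul_le_approx d eps x y e :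
  Rabs d <= eps -> Rabs (x - y) <= e -> Rabs (d * x) <= eps * (Rabs y + e).
Proof.
  intros Hd Hxy. rewrite Rabs_mult. apply Rmult_le_compat; try apply Rabs_pos; [exact Hd |].
  pose proof (Rabs_triang_inv x y). lra.
Qed.

Lemma remainder_le s b N : 0 <= s <= b -> 0 <= N <= 1 -> s ^ 2 * N / 2 <= b ^ 2 / 2.
Proof.
  intros Hs HN. assert (s ^ 2 <= b ^ 2) by (apply pow_incr; exact Hs).
  pose proof (pow2_ge_0 s). nra.
Qed.

Lemma GQ_le_Rot_M eps t p a th ph al S St w :
  unit2 w -> norm3 S <= 1 -> norm3 (sub3 S St) <= kappa ->
  -4 <= t <= 4 -> -4 <= p <= 4 -> -4 <= a <= 4 ->
  Rabs (th - t) <= eps -> Rabs (ph - p) <= eps -> Rabs (al - a) <= eps ->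
  GQ eps t p a St w <= dot2 (Rot al (Mmat th ph S)) w.
Proof.
  intros Hw HS HSt Ht Hp Ha Hth Hph Hal.
  pose proof (Rot_M_taylor a t p (al - a) (th - t) (ph - p) S w Hw) as Htaylor.
  replace (a + (al - a)) with al in Htaylor by ring.
  replace (t + (th - t)) with th in Htaylor by ring.
  replace (p + (ph - p)) with ph in Htaylor by ring.
  pose proof (Rabs_pos (al - a)); pose proof (Rabs_pos (th - t)); pose proof (Rabs_pos (ph - p)).
  assert (Hrem : (Rabs (al - a) + Rabs (th - t) + Rabs (ph - p)) ^ 2 * norm3 S / 2
                 <= (3 * eps) ^ 2 / 2)
    by (apply remainder_le; split; [lra | lra | apply sqrt_pos | exact HS]).
  destruct (Rot_M_forms_err t p a S St w Hw HS HSt Ht Hp Ha) as [eV [eA [eT eP]]].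
  pose proof (Rabs_mul_le_approx _ _ _ _ _ Hal eA).
  pose proof (Rabs_mul_le_approx _ _ _ _ _ Hth eT).
  pose proof (Rabs_mul_le_approx _ _ _ _ _ Hph eP).
  unfold GQ.
  repeat match goal with H : Rabs _ <= _ |- _ => apply Rabs_le_between in H end.
  lra.
Qed.

Lemma M_le_HQ eps t p th ph S St w :
  unit2 w -> norm3 S <= 1 -> norm3 (sub3 S St) <= kappa ->
  -4 <= t <= 4 -> -4 <= p <= 4 -> Rabs (th - t) <= eps -> Rabs (ph - p) <= eps ->
  dot2 (Mmat th ph S) w <= HQ eps t p w St.
Proof.
  intros Hw HS HSt Ht Hp Hth Hph.
  pose proof (Rot_M_taylor 0 t p 0 (th - t) (ph - p) S w Hw) as Htaylor.
  replace (t + (th - t)) with th in Htaylor by ring.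
  replace (p + (ph - p)) with ph in Htaylor by ring.
  rewrite Rplus_0_r, Rabs_R0, Rplus_0_l, Rmult_0_l, Rplus_0_l, !Rot_0 in Htaylor.
  pose proof (Rabs_pos (th - t)); pose proof (Rabs_pos (ph - p)).
  assert (Hrem : (Rabs (th - t) + Rabs (ph - p)) ^ 2 * norm3 S / 2 <= (2 * eps) ^ 2 / 2)
    by (apply remainder_le; split; [lra | lra | apply sqrt_pos | exact HS]).
  destruct (M_forms_err t p S St w Hw HS HSt Ht Hp) as [eV [eT eP]].
  pose proof (Rabs_mul_le_approx _ _ _ _ _ Hth eT).
  pose proof (Rabs_mul_le_approx _ _ _ _ _ Hph eP).
  unfold HQ.
  repeat match goal with H : Rabs _ <= _ |- _ => apply Rabs_le_between in H end.
  lra.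
Qed.

Lemma rsum_weighted_le n (l q : nat -> R) c :
  (forall j, (j < n)%nat -> 0 <= l j) -> (forall j, (j < n)%nat -> q j <= c) ->
  rsum n (fun j => l j * q j) <= c * rsum n l.
Proof.
  induction n as [|n IHn]; intros Hl Hq; cbn [rsum]; [lra |].
  pose proof (IHn (fun j Hj => Hl j ltac:(lia)) (fun j Hj => Hq j ltac:(lia))).
  pose proof (Hl n ltac:(lia)); pose proof (Hq n ltac:(lia)). nra.
Qed.

Lemma rsum_weighted_lt n (l q : nat -> R) c :
  (forall j, (j < n)%nat -> 0 <= l j) -> (forall j, (j < n)%nat -> q j < c) ->
  0 < rsum n l -> rsum n (fun j => l j * q j) < c * rsum n l.
Proof.
  induction n as [|n IHn]; intros Hl Hq Hpos; cbn [rsum] in *; [lra |].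
  assert (Hl' : forall j, (j < n)%nat -> 0 <= l j) by (intros j Hj; apply Hl; lia).
  assert (Hq' : forall j, (j < n)%nat -> q j < c) by (intros j Hj; apply Hq; lia).
  pose proof (Hq n ltac:(lia)).
  destruct (Hl n ltac:(lia)) as [Hln | Hln].
  - pose proof (rsum_weighted_le n l q c Hl' (fun j Hj => Rlt_le _ _ (Hq' j Hj))). nra.
  - rewrite <- Hln in *. pose proof (IHn Hl' Hq' ltac:(lra)). lra.
Qed.

Lemma rsum_mul_add n (l f g : nat -> R) c d :
  rsum n (fun j => l j * f j) * c + rsum n (fun j => l j * g j) * d
  = rsum n (fun j => l j * (f j * c + g j * d)).
Proof. induction n as [|n IHn]; cbn [rsum]; [ring | rewrite <- IHn; ring]. Qed.

Lemma in_conv2_dot2_lt n (Q : nat -> vec2) x w c :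
  in_conv2 n Q x -> (forall j, (j < n)%nat -> dot2 (Q j) w < c) -> dot2 x w < c.
Proof.
  intros [l [Hl [Hl1 [Hx1 Hx2]]]] HQ.
  pose proof (rsum_weighted_lt n l (fun j => dot2 (Q j) w) c Hl HQ ltac:(lra)) as H.
  rewrite Hl1, Rmult_1_r in H. unfold dot2 in *.
  rewrite Hx1, Hx2, rsum_mul_add. exact H.
Qed.

Lemma in_int_conv2_in_conv2 n (Q : nat -> vec2) x : in_int_conv2 n Q x -> in_conv2 n Q x.
Proof.
  intros [r [Hr Hball]]. apply Hball.
  unfold dist2. rewrite !Rminus_diag. replace (0 ^ 2 + 0 ^ 2) with 0 by ring.
  rewrite sqrt_0. exact Hr.
Qed.

Theorem theorem6p7 (n : nat) (P Pt : nat -> vec3) (s : nat)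
  (eps t1 p1 t2 p2 a : R) (w : vec2) :
  polyhedron n P -> pointsymmetric n P -> radius_one n P ->
  kappa_rat_approx n P Pt ->
  (s < n)%nat ->
  0 < eps ->
  is_rat t1 -> is_rat p1 -> is_rat t2 -> is_rat p2 -> is_rat a ->
  -4 <= t1 <= 4 -> -4 <= p1 <= 4 -> -4 <= t2 <= 4 -> -4 <= p2 <= 4 -> -4 <= a <= 4 ->
  is_rat2 w -> fst w ^ 2 + snd w ^ 2 = 1 ->
  (forall i, (i < n)%nat -> HQ eps t2 p2 w (Pt i) < GQ eps t1 p1 a (Pt s) w) ->
  ~ exists th1 ph1 th2 ph2 al : R,
      Rabs (th1 - t1) <= eps /\ Rabs (ph1 - p1) <= eps /\
      Rabs (th2 - t2) <= eps /\ Rabs (ph2 - p2) <= eps /\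
      Rabs (al - a) <= eps /\
      forall i, (i < n)%nat ->
        in_int_conv2 n (fun j => Mmat th2 ph2 (P j)) (Rot al (Mmat th1 ph1 (P i))).
Proof.
  (* Only [norm3 (P i) <= 1] and the approximation property are needed. *)
  intros _ _ [Hradius _] Happrox Hs _ _ _ _ _ _ Ht1 Hp1 Ht2 Hp2 Ha _ Hw HHG
    [th1 [ph1 [th2 [ph2 [al [Hth1 [Hph1 [Hth2 [Hph2 [Hal Hin]]]]]]]]]].
  assert (Hlow : GQ eps t1 p1 a (Pt s) w <= dot2 (Rot al (Mmat th1 ph1 (P s))) w)
    by (apply GQ_le_Rot_M; auto; apply Happrox, Hs).
  assert (Hup : forall j, (j < n)%nat -> dot2 (Mmat th2 ph2 (P j)) w <= HQ eps t2 p2 w (Pt j))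
    by (intros j Hj; apply M_le_HQ; auto; apply Happrox, Hj).
  apply (Rlt_irrefl (dot2 (Rot al (Mmat th1 ph1 (P s))) w)).
  apply (in_conv2_dot2_lt n (fun j => Mmat th2 ph2 (P j))).
  - apply in_int_conv2_in_conv2, Hin, Hs.
  - intros j Hj. pose proof (Hup j Hj). pose proof (HHG j Hj). lra.
Qed.
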